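(* Let $X$ be a locally compact metrizable space, and write $X = X_p \cup X_s$ for its unique decomposition into a disjoint union of a perfect set $X_p$ and a scattered set $X_s$. Then the hypocompact radical of the commutative Banach algebra $C_0(X)$ is $$C_0(X)_{hc} = \{ f \in C_0(X) : f(x) = 0 \text{ for all } x \in X_p \}.$$
   Context: For a Banach algebra $\mathcal B$, an element $a\in\mathcal B$ is called compact if the map $M_{a,a}:\mathcal B\to\mathcal B$, $x\mapsto axa$, is a compact operator. A Banach algebra $\mathcal B$ is hypocompact if every nonzero quotient $\mathcal B/\mathcal J$ by a closed two-sided ideal $\mathcal J$ contains a nonzero compact element; an ideal is hypocompact if it is hypocompact as an algebra. Every Banach algebra $\mathcal B$ has a largest hypocompact ideal, which is closed; it is called the hypocompact radical and denoted $\mathcal B_{hc}$. A subset $Y$ of a topological space is dense in itself if it has no isolated points (in the relative topology), perfect if it is closed and dense in itself, and scattered if it contains no nonempty dense-in-itself subsets. Every space $X$ is uniquely the disjoint union $X=X_p\cup X_s$ of a perfect set $X_p$ and a scattered set $X_s$. *)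

From mathcomp Require Import all_boot all_algebra.
From mathcomp Require Import all_classical all_reals all_analysis.
From mathcomp Require Import complex.
Import GRing.Theory Num.Theory.
Local Open Scope classical_set_scope.
Local Open Scope ring_scope.

Set Implicit Arguments.
Unset Strict Implicit.
Unset Printing Implicit Defensive.

Section Defs.
Variable R : realType.

Section Top.
Variable X : topologicalType.

Definition dense_in_itself (Y : set X) : Prop :=
  forall y, Y y -> forall U, nbhs y U -> exists z, [/\ Y z, U z & z <> y].

Definition perfect (Y : set X) : Prop := closed Y /\ dense_in_itself Y.

Definition scattered (Y : set X) : Prop :=
  forall Z, Z `<=` Y -> dense_in_itself Z -> Z = set0.
End Top.

Section C0.
Variable X : topologicalType.
Local Notation F := (X -> R[i]).

Definition cnorm (z : R[i]) : R := Normc.normc z.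

Definition continuousC (f : F) : Prop :=
  forall x (e : R), 0 < e -> \forall y \near x, cnorm (f y - f x) < e.

Definition vanishes_at_infinity (f : F) : Prop :=
  forall e : R, 0 < e -> exists K : set X,
    compact K /\ forall x, ~ K x -> cnorm (f x) < e.

Definition C0 : set F := [set f | continuousC f /\ vanishes_at_infinity f].

Definition supnorm_le (f : F) (r : R) : Prop := forall x, cnorm (f x) <= r.

(* quotient norm of the class of f modulo K is at most r:
   inf_{k in K} ||f - k||_oo <= r *)
Definition qnorm_le (K : set F) (f : F) (r : R) : Prop :=
  forall e : R, 0 < e -> exists k, K k /\ supnorm_le (f - k) (r + e).

Definition scal (c : R[i]) (f : F) : F := fun t => c * f t.

Definition is_ideal (A I : set F) : Prop :=
  [/\ I `<=` A, I 0,
      (forall f g, I f -> I g -> I (f + g)),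
      (forall c f, I f -> I (scal c f)) &
      (forall a k, A a -> I k -> I (a * k) /\ I (k * a))].

Definition closed_in (A I : set F) : Prop :=
  forall f, A f ->
    (forall e : R, 0 < e -> exists k, I k /\ supnorm_le (f - k) e) -> I f.

(* the class of a is a compact element of the quotient A/K, i.e. the operator
   [x] |-> [a x a] on A/K is compact: the image of the closed unit ball of A/K
   is (pre)compact = totally bounded for the quotient norm *)
Definition compact_elt (A K : set F) (a : F) : Prop :=
  forall e : R, 0 < e -> exists s : seq F,
    (forall y, y \in s -> A y) /\
    forall x, A x -> qnorm_le K x 1 ->
      exists2 y, y \in s & qnorm_le K (a * x * a - y) e.

Definition hypocompact (A : set F) : Prop :=
  forall K, is_ideal A K -> closed_in A K -> K <> A ->
    exists a, [/\ A a, ~ K a & compact_elt A K a].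

End C0.
End Defs.

(* Write S for the functions of C_0(X) vanishing on X_p.

   Hull-kernel: a closed ideal K of S contains every h in S vanishing on the
   hull of K.  By compactness of {|h| >= e}, finitely many elements of K give
   k = sum |m|^2 in K with k >= |h|^2 there, and h k / (k + e^2) is within e
   of h.

   S is hypocompact: if K <> S is a closed ideal, some g in S \ K is nonzero
   at a point of the hull; such points lie in the scattered part X_s, so one
   of them, t, is isolated among them.  For a bump a at t supported away from
   X_p and the other hull points, a x a = x(t) a^2 modulo K, so a x a is
   within e of c a^2 for c in a finite e-net of the unit disc.

   A hypocompact ideal I vanishes on X_p: otherwise, with K = I /\ S, a
   compact element a of I/K is nonzero at some x1 in X_p.  Since X_p is dense
   in itself, x1 has infinitely many nearby points p_n of X_p with pairwise
   separating neighbourhoods; bumps there give x_n of norm <= 1 whose images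
   a x_n a are pairwise far apart modulo K (evaluate at p_n, a hull point). *)

From HB Require Import structures.
From mathcomp Require Import all_boot all_algebra.
From mathcomp Require Import all_classical all_reals all_analysis.
From mathcomp Require Import finmap complex ring lra.
Import GRing.Theory Num.Theory order.Order.TTheory.
Import numFieldNormedType.Exports.
Set Implicit Arguments.
Unset Strict Implicit.
Unset Printing Implicit Defensive.

Local Open Scope classical_set_scope.
Local Open Scope ring_scope.
Local Open Scope complex_scope.

Section ComplexModulus.
Context {R : realType}.
Implicit Types (z w : R[i]) (r : R).

Lemma cnorm_ge0 z : 0 <= cnorm z.
Proof. by case: z => a b; rewrite /cnorm /= sqrtr_ge0. Qed.

Lemma cnorm0 : cnorm (0 : R[i]) = 0.
Proof. exact: Normc.normc0. Qed.

Lemma cnorm1 : cnorm (1 : R[i]) = 1.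
Proof. by rewrite /cnorm /= expr1n expr0n addr0 sqrtr1. Qed.

Lemma cnorm_eq0 z : cnorm z = 0 -> z = 0.
Proof. exact: Normc.eq0_normc. Qed.

Lemma cnorm_gt0 z : (0 < cnorm z) = (z != 0).
Proof.
rewrite lt_def cnorm_ge0 andbT; congr negb.
by apply/eqP/eqP => [/cnorm_eq0|->]; last exact: cnorm0.
Qed.

Lemma cnormD z w : cnorm (z + w) <= cnorm z + cnorm w.
Proof. exact: le_normcD. Qed.

Lemma cnormN z : cnorm (- z) = cnorm z.
Proof. exact: normcN. Qed.

Lemma cnormM z w : cnorm (z * w) = cnorm z * cnorm w.
Proof. exact: Normc.normcM. Qed.

Lemma cnormV z : cnorm z^-1 = (cnorm z)^-1.
Proof. exact: Normc.normcV. Qed.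

Lemma cnorm_distC z w : cnorm (z - w) = cnorm (w - z).
Proof. by rewrite -cnormN opprB. Qed.

Lemma lerB_cnorm z w : cnorm z - cnorm w <= cnorm (z - w).
Proof. by rewrite lerBlDr (le_trans _ (cnormD _ _)) // subrK. Qed.

Lemma cnorm_real r : cnorm r%:C = `|r|.
Proof. by rewrite /cnorm /= expr0n /= addr0 sqrtr_sqr. Qed.

Lemma cnorm_conj z : cnorm z^* = cnorm z.
Proof. by case: z => a b; rewrite /cnorm /= sqrrN. Qed.

Lemma mulc_conj z : z * z^* = (cnorm z ^+ 2)%:C.
Proof. by rewrite -sqr_normc rmorphXn. Qed.

Lemma cnorm_ge_Re z : `|complex.Re z| <= cnorm z.
Proof.
case: z => a b; rewrite /cnorm /= -sqrtr_sqr.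
by apply: ler_wsqrtr; rewrite lerDl sqr_ge0.
Qed.

Lemma cnorm_ge_Im z : `|complex.Im z| <= cnorm z.
Proof.
case: z => a b; rewrite /cnorm /= -sqrtr_sqr.
by apply: ler_wsqrtr; rewrite lerDr sqr_ge0.
Qed.

Lemma cnorm_le_ReIm z : cnorm z <= `|complex.Re z| + `|complex.Im z|.
Proof.
case: z => a b; rewrite /cnorm /=.
have sq : a ^+ 2 + b ^+ 2 <= (`|a| + `|b|) ^+ 2.
  rewrite sqrrD !real_normK ?num_real // -addrA lerD2l lerDr.
  by rewrite mulrn_wge0 // mulr_ge0.
by rewrite (le_trans (ler_wsqrtr sq)) // sqrtr_sqr ger0_norm // addr_ge0.
Qed.

End ComplexModulus.

Section ContinuousC.
Variables (R : realType) (X : topologicalType).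
Implicit Types f g : X -> R[i].

Lemma continuousC_cst (c : R[i]) : continuousC (fun _ : X => c).
Proof. by move=> x e e0; apply: nearW => y; rewrite subrr cnorm0. Qed.

Lemma continuousCD f g : continuousC f -> continuousC g -> continuousC (f + g).
Proof.
move=> cf cg x e e0; have e2 : 0 < e / 2 by rewrite divr_gt0.
near=> y; have fy : cnorm (f y - f x) < e / 2 by near: y; exact: cf.
have gy : cnorm (g y - g x) < e / 2 by near: y; exact: cg.
rewrite /= opprD addrACA (le_lt_trans (cnormD _ _)) // [e]splitr.
exact: ltrD.
Unshelve. all: by end_near.
Qed.

Lemma continuousCM f g : continuousC f -> continuousC g -> continuousC (f * g).
Proof.
move=> cf cg x e e0; set A := cnorm (f x); set B := cnorm (g x).
have [A0 B0] : 0 <= A /\ 0 <= B by split; apply: cnorm_ge0.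
have df : 0 < Num.min 1 (e / 4 / (B + 1)).
  by rewrite lt_min ltr01 /= !divr_gt0 // ltr_pwDr.
have dg : 0 < e / 2 / (A + 1) by rewrite !divr_gt0 // ltr_pwDr.
near=> y.
have ha : cnorm (f y - f x) < Num.min 1 (e / 4 / (B + 1)) by near: y; exact: cf.
have hb : cnorm (g y - g x) < e / 2 / (A + 1) by near: y; exact: cg.
change (cnorm (f y * g y - f x * g x) < e).
rewrite (_ : _ - _ = f y * (g y - g x) + (f y - f x) * g x); last first.
  by rewrite mulrBr mulrBl addrA subrK.
rewrite (le_lt_trans (cnormD _ _)) // !cnormM -/B.
move: ha; rewrite lt_min => /andP[ha1 ha2].
have := cnorm_ge0 (f y - f x); have := cnorm_ge0 (g y - g x).
have fyA : cnorm (f y) <= cnorm (f y - f x) + A.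
  by rewrite (le_trans _ (cnormD _ _)) // subrK.
have aB : cnorm (f y - f x) * (B + 1) <= e / 4 by rewrite -ler_pdivlMr ?ltr_pwDr // ltW.
have bA : cnorm (g y - g x) * (A + 1) <= e / 2 by rewrite -ler_pdivlMr ?ltr_pwDr // ltW.
nra.
Unshelve. all: by end_near.
Qed.

Lemma continuousCZ (c : R[i]) f : continuousC f -> continuousC (scal c f).
Proof. exact/continuousCM/continuousC_cst. Qed.

Lemma continuousC_conj f : continuousC f -> continuousC (fun y => (f y)^*).
Proof.
by move=> cf x e e0; apply: filterS (cf x _ e0) => y; rewrite -rmorphB cnorm_conj.
Qed.

Lemma continuousC_real (r : X -> R) : continuous r -> continuousC (fun y => (r y)%:C).
Proof.
move=> cr x e e0; have : \forall y \near x, ball (r x) e (r y).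
  by apply: cr; apply: nbhsx_ballx.
by apply: filterS => y; rewrite -rmorphB cnorm_real distrC.
Qed.

Lemma continuousCV f (d : R) : 0 < d -> (forall y, d <= cnorm (f y)) ->
  continuousC f -> continuousC (fun y => (f y)^-1).
Proof.
move=> d0 fd cf x e e0; have ed : 0 < e * (d * d) by rewrite !mulr_gt0.
apply: filterS (cf x _ ed) => y fyx.
have f_neq0 z : f z != 0 by rewrite -cnorm_gt0 (lt_le_trans d0).
have -> : (f y)^-1 - (f x)^-1 = (f x - f y) / (f y * f x).
  by field; rewrite !f_neq0.
rewrite cnormM cnormV cnormM cnorm_distC ltr_pdivrMr ?mulr_gt0 ?cnorm_gt0 //.
by rewrite (lt_le_trans fyx) // ler_pM2l // ler_pM // ltW.
Qed.

Lemma open_cnorm_lt f g : continuousC f -> continuousC g ->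
  open [set y | cnorm (f y) < cnorm (g y)].
Proof.
move=> cf cg; rewrite openE => y /= fgy.
have d0 : 0 < (cnorm (g y) - cnorm (f y)) / 2 by rewrite divr_gt0 // subr_gt0.
near=> z; have : cnorm (f z - f y) < (cnorm (g y) - cnorm (f y)) / 2.
  by near: z; exact: cf.
have : cnorm (g z - g y) < (cnorm (g y) - cnorm (f y)) / 2 by near: z; exact: cg.
have := lerB_cnorm (f z) (f y); have := lerB_cnorm (g y) (g z).
by rewrite cnorm_distC /=; lra.
Unshelve. all: by end_near.
Qed.

Lemma closed_cnorm_ge f (e : R) : 0 <= e -> continuousC f ->
  closed [set y | e <= cnorm (f y)].
Proof.
move=> e0 cf; have cnorm_e : cnorm e%:C = e by rewrite cnorm_real ger0_norm.
have -> : [set y | e <= cnorm (f y)] =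
    ~` [set y | cnorm (f y) < cnorm ((fun _ => e%:C) y)].
  by apply/seteqP; split => y; rewrite /setC /mkset cnorm_e leNgt => /negP.
exact/open_closedC/open_cnorm_lt/continuousC_cst.
Qed.

End ContinuousC.

Section C0Algebra.
Variables (R : realType) (X : topologicalType).
Implicit Types f g : X -> R[i].

Lemma vanishes_at_infinity_dom {f g} {M : R} : 0 < M -> vanishes_at_infinity g ->
  (forall y, cnorm (f y) <= M * cnorm (g y)) -> vanishes_at_infinity f.
Proof.
move=> M0 vg fg e e0; have [K [cK gK]] := vg _ (divr_gt0 e0 M0).
exists K; split => // x Kx; rewrite (le_lt_trans (fg x)) //.
by rewrite mulrC -ltr_pdivlMr // gK.
Qed.

Lemma vanishes_at_infinityD f g : vanishes_at_infinity f ->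
  vanishes_at_infinity g -> vanishes_at_infinity (f + g).
Proof.
move=> vf vg e e0; have e2 : 0 < e / 2 by rewrite divr_gt0.
have [[Kf [cKf fK]] [Kg [cKg gK]]] := (vf _ e2, vg _ e2).
exists (Kf `|` Kg); split => [|x /not_orP[xKf xKg]]; first exact: compactU.
rewrite (le_lt_trans (cnormD _ _)) // [e]splitr.
by rewrite ltrD ?fK ?gK.
Qed.

Lemma vanishes_at_infinityM f g : vanishes_at_infinity f ->
  vanishes_at_infinity g -> vanishes_at_infinity (f * g).
Proof.
move=> vf vg e e0; have [[Kf [cKf fK]] [Kg [cKg gK]]] := (vf _ ltr01, vg _ e0).
exists (Kf `|` Kg); split => [|x /not_orP[xKf xKg]]; first exact: compactU.
rewrite /= cnormM; have := fK _ xKf; have := gK _ xKg.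
have := cnorm_ge0 (f x); have := cnorm_ge0 (g x); nra.
Qed.

Lemma C0D f g : C0 f -> C0 g -> C0 (f + g).
Proof.
by move=> [cf vf] [cg vg]; split; [exact: continuousCD|exact: vanishes_at_infinityD].
Qed.

Lemma C0M f g : C0 f -> C0 g -> C0 (f * g).
Proof.
by move=> [cf vf] [cg vg]; split; [exact: continuousCM|exact: vanishes_at_infinityM].
Qed.

Lemma C0Z (c : R[i]) f : C0 f -> C0 (scal c f).
Proof.
move=> [cf vf]; split; first exact: continuousCZ.
apply: (vanishes_at_infinity_dom (M := cnorm c + 1) _ vf).
  by rewrite ltr_pwDr ?cnorm_ge0.
by move=> y; rewrite cnormM ler_wpM2r ?cnorm_ge0 ?lerDl.
Qed.

Lemma C0N f : C0 f -> C0 (- f).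
Proof.
move=> /(C0Z (-1)); congr C0.
by apply: funext => y; rewrite /scal mulN1r.
Qed.

Lemma C0B f g : C0 f -> C0 g -> C0 (f - g).
Proof. by move=> Cf /C0N; apply: C0D. Qed.

Lemma C0_conj f : C0 f -> C0 (fun y => (f y)^*).
Proof.
move=> [cf vf]; split; first exact: continuousC_conj.
by apply: (vanishes_at_infinity_dom ltr01 vf) => y; rewrite cnorm_conj mul1r.
Qed.

Lemma C0_cst0 : C0 (0 : X -> R[i]).
Proof.
split; first exact: continuousC_cst.
by move=> e e0; exists set0; split => [|x _]; [exact: compact0|rewrite cnorm0].
Qed.

End C0Algebra.

Section Ideal.
Variables (R : realType) (X : topologicalType) (A I : set (X -> R[i])).
Hypothesis idI : is_ideal A I.

Lemma is_ideal_sub : I `<=` A. Proof. by case: idI. Qed.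
Lemma is_ideal0 : I 0. Proof. by case: idI. Qed.
Lemma is_idealD f g : I f -> I g -> I (f + g). Proof. by case: idI => _ _ + _ _; apply. Qed.
Lemma is_idealZ c f : I f -> I (scal c f). Proof. by case: idI => _ _ _ + _; apply. Qed.
Lemma is_idealMl a k : A a -> I k -> I (a * k).
Proof. by case: idI => _ _ _ _ /(_ a k) + Aa Ik => /(_ Aa Ik) []. Qed.
Lemma is_idealMr a k : A a -> I k -> I (k * a).
Proof. by case: idI => _ _ _ _ /(_ a k) + Aa Ik => /(_ Aa Ik) []. Qed.

End Ideal.

Section Hull.
Variables (R : realType) (X : topologicalType) (K : set (X -> R[i])).

Definition hull : set X := [set x | forall k, K k -> k x = 0].

Lemma qnorm_le_hull f r x : hull x -> qnorm_le K f r -> cnorm (f x) <= r.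
Proof.
move=> Kx fr; apply/ler_addgt0Pr => e e0; have [k [Kk fk]] := fr e e0.
by have := fk x; rewrite !fctE (Kx _ Kk) subr0.
Qed.

End Hull.

Section VanishingIdeal.
Variables (R : realType) (X : topologicalType) (Z : set X).
Local Notation F := (X -> R[i]).
Implicit Types f g : F.

Definition vanishing_on : set F := [set f | C0 f /\ forall x, Z x -> f x = 0].

Lemma vanishing_onD f g : vanishing_on f -> vanishing_on g -> vanishing_on (f + g).
Proof.
move=> [Cf f0] [Cg g0]; split => [|x Zx]; first exact: C0D.
by rewrite !fctE f0 // g0 // addr0.
Qed.

Lemma vanishing_onB f g : vanishing_on f -> vanishing_on g -> vanishing_on (f - g).
Proof.
move=> [Cf f0] [Cg g0]; split => [|x Zx]; first exact: C0B.
by rewrite !fctE f0 // g0 // subrr.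
Qed.

Lemma vanishing_onZ c f : vanishing_on f -> vanishing_on (scal c f).
Proof. by move=> [Cf f0]; split => [|x Zx]; [exact: C0Z|rewrite /scal f0 ?mulr0]. Qed.

Lemma vanishing_onMl a f : C0 a -> vanishing_on f -> vanishing_on (a * f).
Proof. by move=> Ca [Cf f0]; split => [|x Zx]; [exact: C0M|rewrite fctE f0 ?mulr0]. Qed.

Lemma vanishing_onMr a f : C0 a -> vanishing_on f -> vanishing_on (f * a).
Proof. by move=> Ca [Cf f0]; split => [|x Zx]; [exact: C0M|rewrite fctE f0 ?mul0r]. Qed.

Lemma vanishing_on_conj f : vanishing_on f -> vanishing_on (fun y => (f y)^*).
Proof. by move=> [Cf f0]; split => [|x Zx]; [exact: C0_conj|rewrite f0 ?conjc0]. Qed.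

Lemma vanishing_on_ideal : is_ideal (@C0 R X) vanishing_on.
Proof.
split; [by move=> f []|split => //; exact: C0_cst0|exact: vanishing_onD|
  exact: vanishing_onZ|].
by move=> a f Ca Sf; split; [exact: vanishing_onMl|exact: vanishing_onMr].
Qed.

Lemma ideal_setI_vanishing (I : set F) : is_ideal (@C0 R X) I ->
  is_ideal I (I `&` vanishing_on).
Proof.
move=> idI; have IC0 := is_ideal_sub idI.
split; first by move=> f [].
- by split; [exact: is_ideal0 idI|split => //; exact: C0_cst0].
- by move=> f g [If Sf] [Ig Sg]; split; [exact: (is_idealD idI If Ig)|exact: vanishing_onD].
- by move=> c f [If Sf]; split; [exact: (is_idealZ idI c If)|exact: vanishing_onZ].
move=> a k Ia [Ik Sk]; have Ca := IC0 _ Ia.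
by split; split; [exact: (is_idealMl idI Ca Ik)|exact: vanishing_onMl|
  exact: (is_idealMr idI Ca Ik)|exact: vanishing_onMr].
Qed.

Lemma closed_in_setI_vanishing (I : set F) : I `<=` @C0 R X ->
  closed_in I (I `&` vanishing_on).
Proof.
move=> IC0 f If fK; split => //; split => [|x Zx]; first exact: IC0.
apply: cnorm_eq0; apply/le_anti; rewrite cnorm_ge0 andbT.
apply/ler_addgt0Pr => e e0; rewrite add0r; have [k [[_ [_ k0]] fk]] := fK e e0.
by have := fk x; rewrite !fctE k0 // subr0.
Qed.

End VanishingIdeal.

Lemma C0_bump (R : realType) (X : pseudoMetricType R) (x : X) (W : set X) :
    locally_compact [set: X] -> nbhs x W ->
  exists a : X -> R[i], [/\ C0 a, (forall y, exists r : R, a y = r%:C /\ 0 <= r <= 1),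
    a x = 1 & forall y, ~ W y -> a y = 0].
Proof.
move=> lcX Wx; have [U Ux [cU clU]] := lcX x I.
have {}Ux : nbhs x U by move: Ux; rewrite /within /=; apply: filterS => y; apply.
set O := (U `&` W)°; have Ox : O x by apply: filterI.
have OUW y : O y -> U y /\ W y by move/nbhs_singleton.
have [f [cf f01 fx0 fO1]] : exists f : X -> R, [/\ continuous f,
    range f `<=` `[0, 1], [set f y | y in [set x]] `<=` [set 0] &
    [set f y | y in ~` O] `<=` [set 1]].
  apply/uniform_separatorP/point_uniform_separator => //.
  exact/open_closedC/open_interior.
have f1 y : ~ O y -> f y = 1 by move=> Oy; apply: fO1; exists y.
exists (fun y => (1 - f y)%:C); split.
- split; first by apply: continuousC_real => y; apply: cvgB; [exact: cvg_cst|exact: cf].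
  move=> e e0; exists U; split => // y Uy.
  by rewrite f1 => [|/OUW[]//]; rewrite subrr cnorm0.
- move=> y; exists (1 - f y); split => //.
  have : `[0, 1]%classic (f y) by apply: f01; exists y.
  by rewrite /= in_itv /= => /andP[? ?]; apply/andP; split; lra.
- by rewrite (fx0 (f x)) ?subr0 //; exists x.
- by move=> y Wy; rewrite f1 ?subrr // => /OUW[].
Qed.

(* [compact_cover] is only stated for pointed spaces; the empty space is
   handled separately. *)
Section PointedCopy.
Variables (X : topologicalType) (x0 : X).
Let pX : Type := X.
HB.instance Definition _ := Topological.on pX.
HB.instance Definition _ := isPointed.Build pX x0.

Lemma compact_cover_compact_pointed (A : set X) : compact A -> cover_compact A.
Proof. by move=> cA; have : @compact pX A by []; rewrite compact_cover. Qed.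
End PointedCopy.

Lemma compact_cover_compact (X : topologicalType) (A : set X) :
  compact A -> cover_compact A.
Proof.
case: (pselect (exists x : X, True)) => [[x0 _]|X0 _].
  exact: compact_cover_compact_pointed x0 A.
by move=> I D f _ _; exists fset0%fset => // x; have := X0; case; exists x.
Qed.

Section HullKernel.
Variables (R : realType) (X : topologicalType) (Z : set X).
Local Notation F := (X -> R[i]).
Local Notation S := (@vanishing_on R X Z).
Variable K : set F.
Hypotheses (idK : is_ideal S K) (clK : closed_in S K).

Lemma ideal_sum_sqr (I : Type) (s : seq I) (m : I -> F) : (forall c, K (m c)) ->
  K (fun y => (\sum_(c <- s) cnorm (m c y) ^+ 2)%:C).
Proof.
move=> Km; elim: s => [|c s IH].
  by rewrite (_ : (fun _ => _) = 0); [exact: is_ideal0 idK|apply: funext => y; rewrite big_nil].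
rewrite (_ : (fun _ => _) = (fun y => (m c y)^*) * m c + (fun y => (\sum_(c <- s) cnorm (m c y) ^+ 2)%:C)).
  apply: (is_idealD idK _ IH); apply: (is_idealMl idK _ (Km c)).
  exact/vanishing_on_conj/(is_ideal_sub idK).
by apply: funext => y; rewrite big_cons rmorphD !fctE mulrC mulc_conj.
Qed.

Lemma ideal_real_majorant (C : set X) : compact C -> (forall c, C c -> ~ hull K c) ->
  exists2 r : X -> R, K (fun y => (r y)%:C) &
    (forall y, 0 <= r y) /\ (forall y, C y -> 1 <= r y).
Proof.
move=> cC Chull.
have ex_m c : exists m, K m /\ (C c -> 1 < cnorm (m c)).
  have [Cc|nCc] := pselect (C c); last by exists 0; split; [exact: is_ideal0 idK|].
  have /existsNP[k /not_implyP[Kk kc]] := Chull c Cc.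
  have kc0 : 0 < cnorm (k c) by rewrite cnorm_gt0; apply/eqP.
  exists (scal (2 / cnorm (k c))%:C k); split => [|_]; first exact: (is_idealZ idK).
  by rewrite /scal cnormM cnorm_real ger0_norm ?divfK ?gt_eqF ?ltr1n ?divr_ge0 ?ltW.
have [m mP] := choice ex_m.
have cm c : continuousC (m c) by have [/(is_ideal_sub idK) [[]]] := mP c.
have [] := @compact_cover_compact _ _ cC _ C (fun c => [set y | cnorm 1 < cnorm (m c y)]).
- by move=> c _; apply: open_cnorm_lt; [exact: continuousC_cst|exact: cm].
- by move=> c Cc; exists c => //; rewrite /mkset cnorm1; apply: (mP c).2.
move=> D _ CD.
exists (fun y => \sum_(c <- D) cnorm (m c y) ^+ 2).
  by apply: ideal_sum_sqr => c; case: (mP c).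
split => y; first by apply: sumr_ge0 => c _; apply: sqr_ge0.
move=> /CD[c cD]; rewrite /mkset cnorm1 => my1.
rewrite (bigD1_seq c) ?fset_uniq //= ler_wpDr ?sumr_ge0 // => [d _|].
  exact: sqr_ge0.
by rewrite expr_ge1 ?cnorm_ge0 ?ltW.
Qed.

Lemma ideal_approx h (rho : X -> R) (e : R) : 0 < e -> S h ->
    K (fun y => (rho y)%:C) -> (forall y, 0 <= rho y) ->
    (forall y, e <= cnorm (h y) -> cnorm (h y) ^+ 2 <= rho y) ->
  exists k, K k /\ supnorm_le (h - k) e.
Proof.
move=> e0 [[ch vh] h0] Krho rho0 rho_h; set eta := e ^+ 2.
have eta0 : 0 < eta by rewrite exprn_gt0.
set den := fun y => (rho y)%:C + eta%:C.
have cnorm_den y : cnorm (den y) = rho y + eta.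
  by rewrite /den -rmorphD cnorm_real ger0_norm // addr_ge0 // ltW.
have den_neq0 y : den y != 0 by rewrite -cnorm_gt0 cnorm_den ltr_wpDl.
(* [h - q * rho = h * eta / (rho + eta)], which is small both where
   [|h| >= e] (there [rho >= |h|^2]) and where [|h| < e]. *)
pose q y := h y / den y.
have Sq : S q.
  split => [|x Zx]; last by rewrite /q h0 // mul0r.
  split.
    apply: continuousCM => //; apply: (continuousCV eta0).
      by move=> y; rewrite cnorm_den lerDr.
    apply: continuousCD; last exact: continuousC_cst.
    by case: (is_ideal_sub idK Krho) => -[].
  have etaV0 : 0 < eta^-1 by rewrite invr_gt0.
  apply: (vanishes_at_infinity_dom etaV0 vh) => y.
  rewrite /q cnormM cnormV cnorm_den mulrC ler_wpM2r ?cnorm_ge0 //.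
  by rewrite lef_pV2 ?posrE ?ltr_wpDl // lerDr.
exists (q * (fun y => (rho y)%:C)); split; first exact: (is_idealMl idK).
move=> y; rewrite !fctE /q.
have -> : h y - h y / den y * (rho y)%:C = h y * eta%:C / den y.
  by have := den_neq0 y; rewrite /den => ?; field.
rewrite !cnormM cnormV cnorm_real (ger0_norm (ltW eta0)) cnorm_den.
rewrite ler_pdivrMr ?ltr_wpDl // /eta; set a := cnorm (h y).
have a0 : 0 <= a := cnorm_ge0 _; have erho : 0 <= e * rho y by rewrite mulr_ge0 ?rho0 ?ltW.
have [a_ge|a_lt] := lerP e a; last by nra.
have : e * a ^+ 2 <= e * rho y by rewrite ler_wpM2l ?(ltW e0) ?rho_h.
have : 0 <= e * (a - e) ^+ 2 by rewrite mulr_ge0 ?sqr_ge0 ?ltW.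
nra.
Qed.

Lemma closed_ideal_hull_kernel h : S h -> (forall x, hull K x -> h x = 0) -> K h.
Proof.
move=> Sh h_hull; apply: clK => // e e0; have [[ch vh] _] := Sh.
have [Kc [cKc hKc]] := vh _ e0.
set C := Kc `&` [set y | e <= cnorm (h y)].
have cC : compact C by apply: compact_closedI => //; apply: closed_cnorm_ge => //; apply: ltW.
have [c [_ /= hc] /h_hull hc0|r Kr [r0 r1]] := ideal_real_majorant cC.
  by move: hc; rewrite hc0 cnorm0 leNgt e0.
apply: (ideal_approx (rho := fun y => r y * cnorm (h y) ^+ 2) e0) => //.
- rewrite (_ : (fun _ => _) = (fun y => (r y)%:C) * (h * (fun y => (h y)^*))).
    by apply: (is_idealMr idK _ Kr); apply: vanishing_onMr => //; apply: C0_conj.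
  by apply: funext => y; rewrite !fctE mulc_conj -rmorphM.
- by move=> y; rewrite mulr_ge0 ?sqr_ge0.
move=> y hy; rewrite ler_peMl ?sqr_ge0 // r1 //; split => //.
by apply: contrapT => /hKc; rewrite ltNge hy.
Qed.

End HullKernel.

Lemma finite_net_segment (R : realType) (e : R) : 0 < e -> exists rs : seq R,
  forall r, `|r| <= 1 -> exists2 c, c \in rs & `|r - c| <= e.
Proof.
move=> e0; have := @segment_compact R (-1) 1; rewrite compact_cover.
case/(_ R `[-1, 1]%classic (fun c => ball c e)) => [c _|c c1|D _ De].
- exact: ball_open.
- by exists c => //; apply: ballxx.
exists D => r r1; have /De[c /= cD rc] : `[-1, 1]%classic r.
  by rewrite /= in_itv /= -ler_norml.
by exists c => //; move: rc; rewrite /ball /= distrC => /ltW.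
Qed.

Lemma finite_net_disk (R : realType) (e : R) : 0 < e -> exists cs : seq R[i],
  forall z, cnorm z <= 1 -> exists2 c, c \in cs & cnorm (z - c) <= e.
Proof.
move=> e0; have [rs rsP] := finite_net_segment (divr_gt0 e0 (ltr0n _ 2)).
exists [seq a +i* b | a <- rs, b <- rs] => -[x y] z1.
have [a ars xa] := rsP x (le_trans (cnorm_ge_Re _) z1).
have [b brs yb] := rsP y (le_trans (cnorm_ge_Im _) z1).
exists (a +i* b); first by apply/allpairsP; exists (a, b).
by rewrite (le_trans (cnorm_le_ReIm _)) // [e]splitr lerD.
Qed.

Section CompactBump.
Variables (R : realType) (X : topologicalType) (Z : set X).
Local Notation S := (@vanishing_on R X Z).
Variable K : set (X -> R[i]).
Hypotheses (idK : is_ideal S K) (clK : closed_in S K).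

Lemma compact_elt_bump_at_isolated (t : X) (W : set X) (a : X -> R[i]) :
    hull K t -> (forall z, hull K z -> W z -> z = t) ->
    S a -> (forall y, ~ W y -> a y = 0) -> supnorm_le a 1 ->
  compact_elt S K a.
Proof.
move=> ht tW Sa aW a1 e e0; have [Ca _] := Sa.
have Saa : S (a * a) := vanishing_onMl Ca Sa.
have [cs csP] := finite_net_disk e0.
exists [seq scal c (a * a) | c <- cs]; split.
  by move=> y /mapP[c _ ->]; apply: vanishing_onZ.
move=> x Sx x1; have [c cs_c xc] := csP _ (qnorm_le_hull ht x1).
exists (scal c (a * a)); first exact: map_f.
move=> d d0; exists (a * x * a - scal (x t) (a * a)); split.
  apply: (closed_ideal_hull_kernel idK clK).
    apply: vanishing_onB; last exact: vanishing_onZ.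
    by apply: vanishing_onMr => //; apply: vanishing_onMl.
  move=> z hz; rewrite !fctE /scal; have [Wz|nWz] := pselect (W z).
    by rewrite (tW z hz Wz); ring.
  by rewrite aW // !mul0r mulr0 subrr.
move=> y; rewrite !fctE /scal.
rewrite (_ : _ - _ = (x t - c) * (a y * a y)); last by ring.
have aa1 : cnorm (a y) * cnorm (a y) <= 1 by rewrite mulr_ile1 ?cnorm_ge0 ?a1.
rewrite !cnormM (le_trans (ler_wpM2l (cnorm_ge0 _) aa1)) // mulr1.
by rewrite (le_trans xc) // lerDl ltW.
Qed.

End CompactBump.

Section VanishingHypocompact.
Variables (R : realType) (X : pseudoMetricType R) (Xp Xs : set X).
Hypotheses (lcX : locally_compact [set: X]) (clXp : closed Xp)
  (hXs : scattered Xs) (hcov : Xp `|` Xs = setT).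
Local Notation F := (X -> R[i]).
Local Notation S := (@vanishing_on R X Xp).

Lemma hull_isolated_point (K : set F) : is_ideal S K -> closed_in S K -> K <> S ->
  exists t W, [/\ hull K t, nbhs t W,
  W `&` Xp = set0 & forall z, hull K z -> W z -> z = t].
Proof.
move=> idK clK KS; have [g [Sg nKg]] : exists g, S g /\ ~ K g.
  apply: nonsubset => SK; apply: KS; apply/seteqP; split => //.
  exact: is_ideal_sub idK.
have [[cg _] g0] := Sg.
pose Y := [set x | hull K x /\ g x != 0].
have YXs : Y `<=` Xs.
  move=> x [_ gx]; have : setT x by [].
  by rewrite -hcov => -[/g0 gx0|//]; rewrite gx0 eqxx in gx.
have [t0 Yt0] : exists t, Y t.
  apply: contrapT => nY; apply: nKg.
  apply: (closed_ideal_hull_kernel idK clK Sg) => x hx; apply: contrapT => gx.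
  by apply: nY; exists x; split => //; apply/eqP.
have /existsNP[t /not_implyP[[ht gt] /existsNP[U /not_implyP[Ut UY]]]] :
    ~ dense_in_itself Y.
  by move=> /(hXs YXs) Y0; move: Yt0; rewrite Y0.
exists t, (U `&` ([set y | g y != 0] `&` ~` Xp)); split => //.
- apply: filterI => //; apply: filterI.
    have gt0 : 0 < cnorm (g t) by rewrite cnorm_gt0.
    apply: filterS (cg t _ gt0) => y /=; apply: contraTneq => ->.
    by rewrite sub0r cnormN ltxx.
  apply: open_nbhs_nbhs; split; first by rewrite openC.
  by move/g0 => gt0; rewrite gt0 eqxx in gt.
- by apply/seteqP; split => // y [[_ [_ nXpy]] Xpy].
- move=> z hz [Uz [gz _]]; apply: contrapT => zt; apply: UY.
  by exists z.
Qed.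

Lemma vanishing_on_hypocompact : hypocompact S.
Proof.
move=> K idK clK KS; have [t [W [ht Wt WXp tW]]] := hull_isolated_point idK clK KS.
have [a [Ca a01 at1 aW]] := C0_bump lcX Wt.
have Sa : S a.
  split => // x Xpx; apply: aW => Wx.
  by have : (W `&` Xp) x by []; rewrite WXp.
exists a; split => // [/ht|]; first by rewrite at1 => /eqP; rewrite oner_eq0.
apply: (compact_elt_bump_at_isolated idK clK ht tW Sa aW) => y.
by have [r [-> /andP[r0 r1]]] := a01 y; rewrite cnorm_real ger0_norm.
Qed.

End VanishingHypocompact.

Section SeparatedSequence.
Variables (X : topologicalType) (Y : set X).
Hypotheses (hX : hausdorff_space X) (dY : dense_in_itself Y).

Lemma dense_in_itself_separate (q : X) (W : set X) : open W -> W q -> Y q ->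
  exists q' A B, [/\ Y q', W q', open A & open B] /\ [/\ A q, B q' & A `&` B = set0].
Proof.
move=> oW Wq Yq; have [q' [Yq' Wq' q'q]] := dY Yq (open_nbhs_nbhs (conj oW Wq)).
have qq' : q != q' by apply/eqP => qq'; apply: q'q.
have := hX; rewrite open_hausdorff => /(_ _ _ qq') [[A B] /=] [/set_mem Aq /set_mem Bq'].
by case=> oA oB /eqP AB; exists q', A, B.
Qed.

Lemma separated_sequence (x1 : X) (V : set X) : Y x1 -> nbhs x1 V ->
  exists (p : nat -> X) (U : nat -> set X), forall n,
    [/\ Y (p n), nbhs (p n) (U n), U n `<=` V & forall m, m != n -> ~ U m (p n)].
Proof.
(* Each step separates the current point, in a neighbourhood [U n], from a
   smaller open set [W n.+1] containing the next point. *)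
move=> Yx1 Vx1.
pose state := {s : X * set X | [/\ open s.2, s.2 s.1, Y s.1 & s.2 `<=` V]}.
have step (s : state) : exists t : state * set X, [/\ (sval t.1).2 `<=` (sval s).2,
    (sval t.1).2 `&` t.2 = set0, t.2 `<=` (sval s).2 & nbhs (sval s).1 t.2].
  case: s => -[q W] /= [oW Wq Yq WV].
  have [q' [A [B [[Yq' Wq' oA oB] [Aq Bq' AB]]]]] := dense_in_itself_separate oW Wq Yq.
  have st' : [/\ open (W `&` B), (W `&` B) q', Y q' & W `&` B `<=` V].
    by split => //; [exact: openI|move=> y [/WV]].
  exists (exist _ (q', W `&` B) st', W `&` A) => /=; split => //.
  - by apply/seteqP; split => // y [[_ By] [_ Ay]]; rewrite -AB.
  - by apply: open_nbhs_nbhs; split; [exact: openI|].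
have [next nextP] := choice step.
have st0 : [/\ open (V°), V° x1, Y x1 & V° `<=` V].
  by split => //; [exact: open_interior|exact: interior_subset].
pose s n := iter n (fun s => (next s).1) (exist _ (x1, V°) st0).
pose W n := (sval (s n)).2; pose U n := (next (s n)).2.
pose p n := (sval (s n)).1.
have WS n : W n.+1 `<=` W n by have [] := nextP (s n).
have WU n : W n.+1 `&` U n = set0 by have [] := nextP (s n).
have UW n : U n `<=` W n by have [] := nextP (s n).
have Up n : nbhs (p n) (U n) by have [] := nextP (s n).
have W_dec n m : (n <= m)%N -> W m `<=` W n.
  move=> /subnK <-; elim: (m - n)%N => // k IH y /WS; exact: IH.
exists p, U => n; have [_ Wp Yp WV] := svalP (s n); split => //.
- by move=> y /UW; apply: WV.
move=> m; rewrite neq_ltn => /orP[mn|nm] Ump.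
  have : (W m.+1 `&` U m) (p n) by split => //; apply: W_dec mn _ Wp.
  by rewrite WU.
have : (W n.+1 `&` U n) (p n) by split; [apply: W_dec nm _ (UW _ _ Ump)|exact: nbhs_singleton].
by rewrite WU.
Qed.

End SeparatedSequence.

Lemma pigeonhole_seq (T : eqType) (s : seq T) (y : nat -> T) :
  (forall n, y n \in s) -> exists i j, i != j /\ y i = y j.
Proof.
move=> ys; apply: contrapT => yinj.
have inj : {in iota 0 (size s).+1 &, injective y}.
  move=> i j _ _ yij; apply/eqP; apply: contrapT => /negP ij; apply: yinj.
  by exists i, j.
have : (size (map y (iota 0 (size s).+1)) <= size s)%N.
  by apply: uniq_leq_size; [rewrite map_inj_in_uniq ?iota_uniq|move=> _ /mapP[k _ ->]].
by rewrite size_map size_iota ltnn.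
Qed.

Lemma not_compact_elt_separated (R : realType) (X : topologicalType)
    (A K : set (X -> R[i])) (a : X -> R[i]) (x : nat -> X -> R[i]) (p : nat -> X)
    (d : R) : 0 < d ->
  (forall n, [/\ A (x n), qnorm_le K (x n) 1, hull K (p n),
     d <= cnorm ((a * x n * a) (p n)) & forall m, m != n -> (a * x m * a) (p n) = 0]) ->
  ~ compact_elt A K a.
Proof.
move=> d0 xP ca; have d4 : 0 < d / 4 by rewrite divr_gt0.
have [s [_ sP]] := ca _ d4.
have /choice[y yP] n : exists f, f \in s /\ qnorm_le K (a * x n * a - f) (d / 4).
  have [An x1 _ _ _] := xP n.
  by have [f fs fP] := sP _ An x1; exists f.
have [i [j [ij yij]]] := pigeonhole_seq (fun n => (yP n).1).
have [_ _ hi di _] := xP i; have [_ _ _ _ /(_ j)] := xP i.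
rewrite eq_sym ij => /(_ isT) xji.
have : cnorm ((a * x i * a) (p i) - y i (p i)) <= d / 4 := qnorm_le_hull hi (yP i).2.
have : cnorm ((a * x j * a) (p i) - y j (p i)) <= d / 4 := qnorm_le_hull hi (yP j).2.
rewrite xji -yij sub0r cnormN.
have := lerB_cnorm ((a * x i * a) (p i)) (y i (p i)); lra.
Qed.

Section HypocompactIdeal.
Variables (R : realType) (X : pseudoMetricType R) (Xp : set X).
Hypotheses (hX : hausdorff_space X) (lcX : locally_compact [set: X])
  (dXp : dense_in_itself Xp).
Local Notation F := (X -> R[i]).
Variable I : set F.
Hypothesis idI : is_ideal (@C0 R X) I.

Lemma separated_family (K : set F) (a : F) (x1 : X) : K 0 -> I a -> Xp x1 -> a x1 != 0 ->
  exists (x : nat -> F) (p : nat -> X) (d : R), 0 < d /\ forall n,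
    [/\ I (x n), qnorm_le K (x n) 1, Xp (p n), d <= cnorm ((a * x n * a) (p n))
      & forall m, m != n -> (a * x m * a) (p n) = 0].
Proof.
move=> K0 Ia Xpx1 ax1; set c := cnorm (a x1); have c0 : 0 < c by rewrite cnorm_gt0.
have [[Ca _] c2] := (is_ideal_sub idI Ia, divr_gt0 c0 (ltr0n _ 2)).
pose V := [set y | cnorm (a y - a x1) < c / 2].
have aV y : V y -> c / 2 <= cnorm (a y) <= 2 * c.
  move=> Vy; have := lerB_cnorm (a y) (a x1); have := lerB_cnorm (a x1) (a y).
  by rewrite cnorm_distC -/c /V /= in Vy *; move=> *; apply/andP; split; lra.
have [p [U pU]] := separated_sequence hX dXp Xpx1 (Ca x1 _ c2 : nbhs x1 V).
have Up n : nbhs (p n) (U n) by case: (pU n).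
have /choice[phi phiP] n := C0_bump lcX (Up n).
pose M := 2 * c; have M0 : 0 < M by rewrite mulr_gt0.
have MV0 : 0 <= M^-1 by rewrite invr_ge0 ltW.
pose x n := scal (M^-1)%:C (phi n * a).
have x_val n y : (a * x n * a) y = (M^-1)%:C * phi n y * a y ^+ 3.
  by rewrite !fctE /x /scal !fctE; ring.
have phi1 n y : cnorm (phi n y) <= 1.
  by have [_ /(_ y)[r [-> /andP[r0 r1]]] _ _] := phiP n; rewrite cnorm_real ger0_norm.
exists x, p, ((c / 2) ^+ 3 / M); split => [|n]; first by rewrite divr_gt0 ?exprn_gt0.
have [Xpn _ UV Um] := pU n; have [Cphi _ phin phi0] := phiP n.
split => //.
- exact/(is_idealZ idI)/(is_idealMl idI).
- move=> d d0; exists 0; split => [|y]; first exact: K0.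
  rewrite !fctE subr0 /scal !cnormM cnorm_real (ger0_norm MV0).
  apply: ler_wpDr (ltW d0) _.
  have [/UV/aV/andP[_ aM]|nU] := pselect (U n y); last by rewrite phi0 // cnorm0 !mul0r mulr0.
  rewrite mulrC ler_pdivrMr // mul1r.
  by rewrite (le_trans (ler_wpM2r (cnorm_ge0 _) (phi1 n y))) ?mul1r.
- have /UV/aV/andP[ac _] := nbhs_singleton (Up n).
  rewrite x_val phin mulr1 !cnormM cnorm_real (ger0_norm MV0).
  change ((c / 2) ^+ 3 / M <= M^-1 * cnorm (a (p n)) ^+ 3).
  by rewrite [X in _ <= X]mulrC ler_pM2r ?invr_gt0 // lerXn2r ?nnegrE ?cnorm_ge0 // ltW.
- move=> m mn; have [_ _ _ phim0] := phiP m.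
  by rewrite x_val phim0 ?mulr0 ?mul0r //; apply: Um.
Qed.

Lemma hypocompact_ideal_sub_vanishing : hypocompact I -> I `<=` vanishing_on Xp.
Proof.
move=> hI f If; split => [|x0 Xpx0]; first exact: (is_ideal_sub idI If).
apply: contrapT => fx0; pose K := I `&` vanishing_on Xp.
have idK : is_ideal I K := ideal_setI_vanishing Xp idI.
have [|a [Ia nKa ca]] := hI K idK (closed_in_setI_vanishing (Z := Xp) (is_ideal_sub idI)).
  move=> KI; have : K f by rewrite KI.
  by case=> _ [_ /(_ x0 Xpx0)].
have [x1 [Xpx1 ax1]] : exists x1, Xp x1 /\ a x1 != 0.
  apply: contrapT => nx; apply: nKa; split => //; split => [|x Xpx].
    exact: (is_ideal_sub idI Ia).
  by apply: contrapT => ax; apply: nx; exists x; split => //; apply/eqP.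
have [x [p [d [d0 xP]]]] := separated_family (is_ideal0 idK) Ia Xpx1 ax1.
apply: (not_compact_elt_separated (x := x) (p := p) d0 _ ca) => n.
by have [? ? Xpn ? ?] := xP n; split => // k [_ [_ ->]].
Qed.

End HypocompactIdeal.

Theorem theorem2p2 (R : realType) (X : pseudoMetricType R)
    (hX : hausdorff_space X) (lcX : locally_compact [set: X])
    (Xp Xs : set X) (hXp : perfect Xp) (hXs : scattered Xs)
    (hdisj : Xp `&` Xs = set0) (hcov : Xp `|` Xs = setT) :
  let S := [set f : X -> R[i] | @C0 R X f /\ forall x, Xp x -> f x = 0] in
  [/\ is_ideal (@C0 R X) S, hypocompact S &
      forall I, is_ideal (@C0 R X) I -> hypocompact I -> I `<=` S].
Proof.
have [clXp dXp] := hXp; split.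
- exact: vanishing_on_ideal.
- exact: vanishing_on_hypocompact lcX clXp hXs hcov.
- by move=> I idI hI; exact: (hypocompact_ideal_sub_vanishing hX lcX dXp idI hI).
Qed.
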